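(* Let $a,b,e\in\mathbb Z$ with $a\neq0$, $e>0$, such that $h_2(j)=aj^2+bj+e$ satisfies $h_2(j)\ge0$ for all integers $j\ge0$ (so $h_2\in\mathcal H_0$). Then: (1) if $b\ge 0$, then $\operatorname{hdepth}(h_2)\le 8$; (2) if $b<0$ and $b^2\le 4ae$, then $\operatorname{hdepth}(h_2)\le 11$.
   Context: Let $\mathcal H_0$ denote the set of functions $h:\mathbb Z_{\ge 0}\to\mathbb Z_{\ge 0}$ with $h(0)>0$. For $h\in\mathcal H_0$ and integers $0\le k\le d$, put $\beta_k^d(h)=\sum_{j=0}^k(-1)^{k-j}\binom{d-j}{k-j}h(j)$. The Hilbert depth of $h$ is $\operatorname{hdepth}(h)=\max\{d\in\mathbb Z_{\ge0}:\ \beta_k^d(h)\ge 0\text{ for all }0\le k\le d\}$; this set contains $d=0$ and is known to be bounded above by $\lfloor h(1)/h(0)\rfloor$, so the maximum exists. *)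

From mathcomp Require Import all_boot all_order all_algebra.
Set Implicit Arguments. Unset Strict Implicit. Unset Printing Implicit Defensive.
Import Order.TTheory GRing.Theory Num.Theory.
Local Open Scope ring_scope.

(* Functions h : Z_{>=0} -> Z_{>=0} are represented as h : nat -> int
   (nonnegativity is imposed as a hypothesis where needed). *)

Definition beta (h : nat -> int) (k d : nat) : int :=
  \sum_(j < k.+1) (-1) ^+ (k - j) * ('C(d - j, k - j))%:R * h j.

Definition hdepth_ok (h : nat -> int) (d : nat) : Prop :=
  forall k : nat, (k <= d)%N -> 0 <= beta h k d.

Definition is_hdepth (h : nat -> int) (d : nat) : Prop :=
  hdepth_ok h d /\ forall d' : nat, hdepth_ok h d' -> (d' <= d)%N.

Definition h2 (a b e : int) (j : nat) : int := a * (j%:Z) ^+ 2 + b * j%:Z + e.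

(* Admissibility of d is inherited by every smaller depth, because
   beta_k^d = sum_(i <= k) beta_i^(d+1).  So if hdepth(h2) > 8 (resp. > 11),
   the two conditions beta_1 >= 0 and beta_2 >= 0 at depth 9 (resp. 12) hold;
   these are linear in a, b, e and already contradict b >= 0 (resp. b < 0 and
   b^2 <= 4ae). *)
From mathcomp Require Import all_boot all_order all_algebra.
From mathcomp Require Import ring zify.
Set Implicit Arguments. Unset Strict Implicit. Unset Printing Implicit Defensive.
Import Order.TTheory GRing.Theory Num.Theory.
Local Open Scope ring_scope.

Section HilbertDepth.

Variable h : nat -> int.

Lemma betaSS (k d : nat) : (k <= d)%N ->
  beta h k.+1 d.+1 = beta h k.+1 d - beta h k d.
Proof.
move=> le_kd; rewrite /beta big_ord_recr /= [in RHS]big_ord_recr /= !subnn.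
rewrite !bin0 !expr0 !mul1r [RHS]addrAC; congr (_ + _).
rewrite -sumrB; apply: eq_bigr => -[j /= lt_jk] _.
have le_jd : (j <= d)%N by apply: leq_trans le_kd; rewrite -ltnS.
rewrite subSn // subSn; last by rewrite -ltnS.
rewrite binS natrD exprS.
have -> : (k - j = (k - j).+1.-1)%N by [].
ring.
Qed.

Lemma beta_sumS (k d : nat) : (k <= d)%N ->
  beta h k d = \sum_(i < k.+1) beta h i d.+1.
Proof.
elim: k => [|k IHk] le_kd; first by rewrite big_ord1 /beta !big_ord1 /= !bin0.
rewrite big_ord_recr /= -IHk; last exact: ltnW.
by rewrite betaSS ?(ltnW le_kd) // addrC subrK.
Qed.

Lemma hdepth_okS (d : nat) : hdepth_ok h d.+1 -> hdepth_ok h d.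
Proof.
move=> okS k le_kd; rewrite beta_sumS //; apply: sumr_ge0 => i _; apply: okS.
have := ltn_ord i; lia.
Qed.

Lemma hdepth_okW (n d : nat) : (n <= d)%N -> hdepth_ok h d -> hdepth_ok h n.
Proof.
move=> le_nd; rewrite -(subnKC le_nd); elim: (d - n)%N => [|m IHm].
  by rewrite addn0.
by rewrite addnS => /hdepth_okS.
Qed.

Lemma is_hdepth_leq (d n : nat) :
  is_hdepth h d -> ~ hdepth_ok h n.+1 -> (d <= n)%N.
Proof.
move=> [ok_d _] not_ok; rewrite leqNgt; apply/negP => lt_nd.
exact: not_ok (hdepth_okW lt_nd ok_d).
Qed.

Lemma beta1 (d : nat) : beta h 1 d = h 1%N - d%:R * h 0%N.
Proof.
by rewrite /beta !big_ord_recr big_ord0 /= !subn0 !subnn bin0 bin1; ring.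
Qed.

Lemma beta2 (d : nat) :
  beta h 2 d = h 2%N - (d - 1)%:R * h 1%N + 'C(d, 2)%:R * h 0%N.
Proof.
by rewrite /beta !big_ord_recr big_ord0 /= !subn0 !subnn bin0 bin1; ring.
Qed.

End HilbertDepth.

Lemma h2_not_hdepth_ok9 (a b e : int) :
  0 < e -> 0 <= b -> ~ hdepth_ok (h2 a b e) 9.
Proof.
move=> e_gt0 b_ge0 ok9.
have := ok9 1%N isT; have := ok9 2%N isT.
rewrite beta1 beta2 (_ : 'C(9, 2) = 36)%N // /h2 /=.
lia.
Qed.

Lemma h2_not_hdepth_ok12 (a b e : int) :
  0 < e -> b < 0 -> b ^+ 2 <= 4 * a * e -> ~ hdepth_ok (h2 a b e) 12.
Proof.
move=> e_gt0 b_lt0 disc ok12.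
have := ok12 1%N isT; have := ok12 2%N isT.
rewrite beta1 beta2 (_ : 'C(12, 2) = 66)%N // /h2 /= => beta2_ge0 beta1_ge0.
(* With b = -t e, the two linear conditions force t >= 21/2 while
   b^2 <= 4ae <= 4e (56e - 9b)/7 forces t <= 123/14. *)
have : 0 <= e * (56 * e - 9 * b - 7 * a) by apply: mulr_ge0; lia.
nia.
Qed.

Theorem theorem2p7 (a b e : int) :
  a != 0 -> 0 < e -> (forall j : nat, 0 <= h2 a b e j) ->
  (0 <= b -> forall d : nat, is_hdepth (h2 a b e) d -> (d <= 8)%N) /\
  (b < 0 -> b ^+ 2 <= 4 * a * e ->
     forall d : nat, is_hdepth (h2 a b e) d -> (d <= 11)%N).
Proof.
move=> _ e_gt0 _; split=> [b_ge0 | b_lt0 disc] d hd.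
  exact: is_hdepth_leq hd (h2_not_hdepth_ok9 e_gt0 b_ge0).
exact: is_hdepth_leq hd (h2_not_hdepth_ok12 e_gt0 b_lt0 disc).
Qed.
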